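(* Let $a,w$ satisfy Assumption (A), $n\ge1$, $k>0$, $q\in[0,1)$, $l\ge0$, $S_H>0$, $\beta_{H\leftarrow M},\beta_{M\leftarrow H},\rho,\gamma,\mu>0$, and assume $\hat R_e\,h(p(0),q)>1$. Let $$\eta:=\frac{\hat R_e-(1+l)}{\hat R_e-1}\cdot\frac{1}{1-q},\qquad r(x):=a(x)-\eta\big(a(x)+w(x)\big).$$ Then system (O) has an equilibrium with $I_H^*>0$ if and only if there exists $x\in(0,+\infty)$ with $r(x)=0$ and $$1+l<\hat R_e<1+\frac{l}{q}$$ (the upper bound being void when $q=0$). If such an equilibrium exists, it is unique and given by $$I_H^*=p^{-1}(\eta),\qquad I_M^*=\frac{\beta_{M\leftarrow H}}{\mu}h(p(I_H^* ),q)I_H^*,\qquad Z_i^*=J^*=I_H^*\ (i=1,\dots,n).$$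
   Context: Assumption (A): $a,w:[0,\infty)\to(0,\infty)$ are continuously differentiable with $a'(x)>0$ and $w'(x)\le0$ for all $x\ge0$. Let $c(p,q):=1-p(1-q)$, $p(x):=a(x)/(a(x)+w(x))$ (strictly increasing, so $p^{-1}$ exists on its range), $h(p,q):=c(p,q)/(c(p,q)+l)$, and $\hat R_e:=\sqrt{\frac{\beta_{H\leftarrow M}\beta_{M\leftarrow H}}{\gamma\mu}\rho S_H}$. System (O) is the ODE system, with $S_H>0$ a fixed parameter, $$\dot I_H=\beta_{H\leftarrow M}\rho I_M h(p(J),q)S_H-\gamma I_H,\qquad \dot I_M=\beta_{M\leftarrow H}h(p(J),q)I_H-\mu I_M,$$ $$\dot Z_1=kI_H-kZ_1,\qquad \dot Z_i=kZ_{i-1}-kZ_i\ (i=2,\dots,n),\qquad J:=Z_n$$ (for $n=1$: $\dot J=kI_H-kJ$), on the nonnegative orthant. *)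

From Stdlib Require Import Reals Lra.
From Coquelicot Require Import Coquelicot.
Open Scope R_scope.

Definition C1_on_nonneg (f f' : R -> R) : Prop :=
  (forall x, 0 < x -> is_derive f x (f' x)) /\
  filterlim (fun t => (f t - f 0) / t) (at_right 0) (locally (f' 0)) /\
  (forall x, 0 <= x ->
     filterlim f' (within (fun y => 0 <= y) (locally x)) (locally (f' x))).

Definition assumptionA (a w : R -> R) : Prop :=
  (forall x, 0 <= x -> 0 < a x) /\ (forall x, 0 <= x -> 0 < w x) /\
  exists a' w' : R -> R,
    C1_on_nonneg a a' /\ C1_on_nonneg w w' /\
    (forall x, 0 <= x -> 0 < a' x) /\ (forall x, 0 <= x -> w' x <= 0).

Definition cfun (p q : R) : R := 1 - p * (1 - q).
Definition pfun (a w : R -> R) (x : R) : R := a x / (a x + w x).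
Definition hfun (l p q : R) : R := cfun p q / (cfun p q + l).
Definition Rhat (bHM bMH rho gamma mu SH : R) : R :=
  sqrt (bHM * bMH / (gamma * mu) * rho * SH).

(* Equilibrium of system (O) in the nonnegative orthant.
   State: (IH, IM, Z_1, ..., Z_n), with Z : nat -> R (only indices 1..n matter),
   J := Z n. *)
Definition equilibriumO (a w : R -> R) (n : nat) (k q l SH bHM bMH rho gamma mu : R)
    (IH IM : R) (Z : nat -> R) : Prop :=
  0 <= IH /\ 0 <= IM /\ (forall i, (1 <= i <= n)%nat -> 0 <= Z i) /\
  bHM * rho * IM * hfun l (pfun a w (Z n)) q * SH - gamma * IH = 0 /\
  bMH * hfun l (pfun a w (Z n)) q * IH - mu * IM = 0 /\
  k * IH - k * Z 1%nat = 0 /\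
  (forall i, (2 <= i <= n)%nat -> k * Z (i - 1)%nat - k * Z i = 0).

(* At an equilibrium the chain Z_1, ..., Z_n relays I_H, so J* = I_H*.  Eliminating I_M
   from the two infection equations leaves (h(p(I_H), q) R_e)^2 = 1, i.e. h R_e = 1, which
   is linear in p and forces p(I_H) = eta; this is the root condition r = 0.  Since p maps
   [0, +oo) into (0, 1), eta must lie in (0, 1), which is the window for R_e.  Uniqueness
   holds because p is strictly increasing, its derivative being (a' w - a w') / (a + w)^2. *)
From Stdlib Require Import Reals Lra Lia.
From Coquelicot Require Import Coquelicot.
Open Scope R_scope.

Definition p_equilibrium (Re l q : R) : R := (Re - (1 + l)) / (Re - 1) * (1 / (1 - q)).

Lemma chain_equilibrium_const (n : nat) (k IH : R) (Z : nat -> R) : 0 < k ->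
  k * IH - k * Z 1%nat = 0 ->
  (forall i, (2 <= i <= n)%nat -> k * Z (i - 1)%nat - k * Z i = 0) ->
  forall i, (1 <= i <= n)%nat -> Z i = IH.
Proof.
  intros Hk HZ1 HZi i. induction i as [|[|j] IHi]; intros Hi; [lia| |].
  - apply (Rmult_eq_reg_l k); lra.
  - assert (Hj := HZi (S (S j)) ltac:(lia)).
    replace (S (S j) - 1)%nat with (S j) in Hj by lia.
    rewrite IHi in Hj by lia.
    apply (Rmult_eq_reg_l k); lra.
Qed.

Lemma cfun_pos (P q : R) : 0 < P < 1 -> 0 <= q < 1 -> 0 < cfun P q.
Proof. intros. unfold cfun. nra. Qed.

Lemma hfun_in_unit (l P q : R) : 0 < cfun P q -> 0 <= l -> 0 < hfun l P q <= 1.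
Proof.
  intros Hc Hl. unfold hfun. split.
  - apply Rdiv_lt_0_compat; lra.
  - apply Rmult_le_reg_r with (cfun P q + l); [lra|].
    field_simplify; lra.
Qed.

Lemma hfun_mul_eq1_iff (l P q Re : R) : 0 < cfun P q -> 0 <= l -> 1 < Re -> q < 1 ->
  hfun l P q * Re = 1 <-> P = p_equilibrium Re l q.
Proof.
  intros Hc Hl HRe Hq. unfold hfun, p_equilibrium.
  assert (Hc_l : cfun P q * Re = cfun P q + l <-> P * (1 - q) * (Re - 1) = Re - (1 + l)).
  { unfold cfun. split; intros; lra. }
  split; intros HP.
  - assert (Hrel : P * (1 - q) * (Re - 1) = Re - (1 + l)).
    { apply Hc_l. apply (Rmult_eq_reg_r (/ (cfun P q + l))).
      + rewrite Rinv_r by lra. rewrite <- HP. field. lra.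
      + apply Rinv_neq_0_compat. lra. }
    rewrite <- Hrel. field. lra.
  - assert (Hrel : P * (1 - q) * (Re - 1) = Re - (1 + l)) by (rewrite HP; field; lra).
    apply Hc_l in Hrel. rewrite <- Hrel. field. lra.
Qed.

Lemma p_equilibrium_in_unit_window (Re l q : R) : 1 < Re -> 0 <= q < 1 ->
  0 < p_equilibrium Re l q < 1 -> 1 + l < Re /\ (q = 0 \/ Re < 1 + l / q).
Proof.
  intros HRe Hq Hunit.
  set (e := p_equilibrium Re l q) in Hunit.
  assert (Hnum : Re - (1 + l) = e * ((Re - 1) * (1 - q)))
    by (unfold e, p_equilibrium; field; lra).
  assert (Hd : 0 < (Re - 1) * (1 - q)) by nra.
  split.
  - nra.
  - destruct (Req_dec q 0) as [Hq0|Hq0]; [now left|right].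
    assert (q * (Re - 1) < l) by nra.
    assert (Re - 1 < l / q) by (apply (Rmult_lt_reg_r q); [lra|]; field_simplify; lra).
    lra.
Qed.

Lemma Rhat_nonneg_sqr (bHM bMH rho gamma mu SH : R) :
  0 < bHM -> 0 < bMH -> 0 < rho -> 0 < gamma -> 0 < mu -> 0 < SH ->
  0 <= Rhat bHM bMH rho gamma mu SH /\
  Rhat bHM bMH rho gamma mu SH * Rhat bHM bMH rho gamma mu SH
  = bHM * bMH / (gamma * mu) * rho * SH.
Proof.
  intros. split; [apply sqrt_pos|]. apply sqrt_sqrt.
  apply Rlt_le, Rmult_lt_0_compat; [apply Rmult_lt_0_compat|]; try lra.
  apply Rdiv_lt_0_compat; nra.
Qed.

Section HostVectorBalance.

Variables bHM bMH rho gamma mu SH Re : R.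
Hypotheses (Hgamma : 0 < gamma) (Hmu : 0 < mu).
Hypotheses (HRe : 0 <= Re) (HRe2 : Re * Re = bHM * bMH / (gamma * mu) * rho * SH).

Lemma host_vector_balance_iff (H IH IM : R) : 0 < H -> 0 < IH ->
  (bHM * rho * IM * H * SH - gamma * IH = 0 /\ bMH * H * IH - mu * IM = 0) <->
  (IM = bMH / mu * H * IH /\ H * Re = 1).
Proof.
  intros HH HIH.
  assert (HIM : bMH * H * IH - mu * IM = 0 <-> IM = bMH / mu * H * IH).
  { split; intros E; [apply (Rmult_eq_reg_l mu); [field_simplify|]|subst IM; field]; lra. }
  assert (Hfactor : bHM * rho * (bMH / mu * H * IH) * H * SH - gamma * IH
                    = gamma * IH * ((H * Re) * (H * Re) - 1)).
  { replace ((H * Re) * (H * Re)) with (H * H * (Re * Re)) by ring.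
    rewrite HRe2. field. lra. }
  assert (HHRe : 0 <= H * Re) by nra.
  split.
  - intros [E1 E2]. apply HIM in E2. split; [exact E2|].
    subst IM. rewrite Hfactor in E1.
    assert (Hsq : (H * Re - 1) * (H * Re + 1) = 0).
    { apply (Rmult_eq_reg_l (gamma * IH)); [|nra]. lra. }
    apply Rmult_integral in Hsq. lra.
  - intros [E2 HRe1]. split; [|now apply HIM].
    subst IM. rewrite Hfactor, HRe1. ring.
Qed.

End HostVectorBalance.

Section ProportionOfAttracted.

Variables a w : R -> R.
Hypothesis HA : assumptionA a w.

Lemma pfun_in_unit (x : R) : 0 <= x -> 0 < pfun a w x < 1.
Proof.
  destruct HA as [Ha [Hw _]]. intros Hx.
  specialize (Ha x Hx). specialize (Hw x Hx). unfold pfun. split.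
  - apply Rdiv_lt_0_compat; lra.
  - apply Rmult_lt_reg_r with (a x + w x); [lra|]. field_simplify; lra.
Qed.

Lemma pfun_eq_iff_root (x eta : R) : 0 <= x ->
  pfun a w x = eta <-> a x - eta * (a x + w x) = 0.
Proof.
  destruct HA as [Ha [Hw _]]. intros Hx.
  specialize (Ha x Hx). specialize (Hw x Hx). unfold pfun.
  split; intros E; [subst eta; field; lra|].
  apply (Rmult_eq_reg_r (a x + w x)); [field_simplify|]; lra.
Qed.

Lemma is_derive_pfun (a' w' : R -> R) (x : R) : 0 < x ->
  is_derive a x (a' x) -> is_derive w x (w' x) ->
  is_derive (pfun a w) x ((a' x * w x - a x * w' x) / (a x + w x) ^ 2).
Proof.
  destruct HA as [Ha [Hw _]]. intros Hx Hda Hdw.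
  assert (Hs : 0 < a x + w x) by (specialize (Ha x); specialize (Hw x); lra).
  assert (Hdiv := is_derive_div a (fun t => a t + w t) x _ _ Hda
                    (is_derive_plus a w x _ _ Hda Hdw) ltac:(lra)).
  unfold pfun. replace ((a' x * w x - a x * w' x) / (a x + w x) ^ 2)
    with ((a' x * (a x + w x) - a x * plus (a' x) (w' x)) / (a x + w x) ^ 2);
    [exact Hdiv|].
  unfold plus; simpl. field. lra.
Qed.

Lemma pfun_strict_incr (x y : R) : 0 < x -> x < y -> pfun a w x < pfun a w y.
Proof.
  pose proof HA as [Ha [Hw [a' [w' [[Hda _] [[Hdw _] [Ha' Hw']]]]]]].
  intros Hx Hxy.
  apply (incr_function (pfun a w) 0 p_infty
           (fun t => (a' t * w t - a t * w' t) / (a t + w t) ^ 2)); simpl; try easy.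
  - intros t Ht _. apply is_derive_pfun; auto.
  - intros t Ht _. specialize (Ha t ltac:(lra)). specialize (Hw t ltac:(lra)).
    specialize (Ha' t ltac:(lra)). specialize (Hw' t ltac:(lra)).
    apply Rdiv_lt_0_compat; nra.
Qed.

Lemma pfun_inj_pos (x y : R) : 0 < x -> 0 < y -> pfun a w x = pfun a w y -> x = y.
Proof.
  intros Hx Hy E. destruct (Rtotal_order x y) as [Hlt|[Heq|Hgt]]; [|exact Heq|].
  - assert (T := pfun_strict_incr x y Hx Hlt). lra.
  - assert (T := pfun_strict_incr y x Hy Hgt). lra.
Qed.

End ProportionOfAttracted.

Lemma Rhat_gt1 (a w : R -> R) (q l Re : R) : assumptionA a w -> 0 <= q < 1 -> 0 <= l ->
  Re * hfun l (pfun a w 0) q > 1 -> 1 < Re.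
Proof.
  intros HA Hq Hl HR0.
  assert (Hc0 := cfun_pos _ q (pfun_in_unit a w HA 0 (Rle_refl 0)) Hq).
  destruct (hfun_in_unit l _ q Hc0 Hl). nra.
Qed.

Lemma equilibriumO_pos_iff (a w : R -> R) (n : nat) (k q l SH bHM bMH rho gamma mu : R)
    (IH IM : R) (Z : nat -> R) :
  assumptionA a w -> (1 <= n)%nat -> 0 < k -> 0 <= q < 1 -> 0 <= l -> 0 < SH ->
  0 < bHM -> 0 < bMH -> 0 < rho -> 0 < gamma -> 0 < mu ->
  1 < Rhat bHM bMH rho gamma mu SH ->
  equilibriumO a w n k q l SH bHM bMH rho gamma mu IH IM Z /\ 0 < IH <->
  0 < IH /\ pfun a w IH = p_equilibrium (Rhat bHM bMH rho gamma mu SH) l q /\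
  IM = bMH / mu * hfun l (pfun a w IH) q * IH /\
  (forall i, (1 <= i <= n)%nat -> Z i = IH).
Proof.
  intros HA Hn Hk Hq Hl HSH HbHM HbMH Hrho Hgamma Hmu HRe1.
  destruct (Rhat_nonneg_sqr bHM bMH rho gamma mu SH) as [HRe HRe2]; auto.
  set (Re := Rhat bHM bMH rho gamma mu SH) in *.
  split.
  - intros [[_ [_ [_ [E1 [E2 [E3 E4]]]]]] HIH].
    assert (HZ := chain_equilibrium_const n k IH Z Hk E3 E4).
    rewrite (HZ n ltac:(lia)) in E1, E2.
    assert (Hc := cfun_pos _ q (pfun_in_unit a w HA IH ltac:(lra)) Hq).
    destruct (hfun_in_unit l _ q Hc Hl) as [Hh _].
    destruct (proj1 (host_vector_balance_iff bHM bMH rho gamma mu SH Re Hgamma Hmu HRe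
                       HRe2 _ IH IM Hh HIH) (conj E1 E2)) as [HIM HhRe].
    apply hfun_mul_eq1_iff in HhRe; auto; lra.
  - intros (HIH & Hp & HIM & HZ).
    assert (Hc := cfun_pos _ q (pfun_in_unit a w HA IH ltac:(lra)) Hq).
    destruct (hfun_in_unit l _ q Hc Hl) as [Hh _].
    apply hfun_mul_eq1_iff in Hp; auto; [|lra].
    destruct (proj2 (host_vector_balance_iff bHM bMH rho gamma mu SH Re Hgamma Hmu HRe
                       HRe2 _ IH IM Hh HIH) (conj HIM Hp)) as [E1 E2].
    unfold equilibriumO. rewrite (HZ n ltac:(lia)).
    repeat split; try lra.
    + rewrite HIM. apply Rmult_le_pos; [|lra].
      apply Rmult_le_pos; [apply Rlt_le, Rdiv_lt_0_compat|]; lra.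
    + intros i Hi. rewrite HZ by lia. lra.
    + rewrite HZ by lia. ring.
    + intros i Hi. rewrite !HZ by lia. ring.
Qed.

Theorem mainTheorem11 (a w : R -> R) (n : nat) (k q l SH bHM bMH rho gamma mu : R) :
  assumptionA a w ->
  (1 <= n)%nat -> 0 < k -> 0 <= q < 1 -> 0 <= l -> 0 < SH ->
  0 < bHM -> 0 < bMH -> 0 < rho -> 0 < gamma -> 0 < mu ->
  Rhat bHM bMH rho gamma mu SH * hfun l (pfun a w 0) q > 1 ->
  let Re := Rhat bHM bMH rho gamma mu SH in
  let eta := (Re - (1 + l)) / (Re - 1) * (1 / (1 - q)) in
  let r := fun x => a x - eta * (a x + w x) in
  ((exists IH IM Z, equilibriumO a w n k q l SH bHM bMH rho gamma mu IH IM Z /\ 0 < IH)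
   <->
   ((exists x, 0 < x /\ r x = 0) /\ 1 + l < Re /\ (q = 0 \/ Re < 1 + l / q)))
  /\
  (forall IH IM Z, equilibriumO a w n k q l SH bHM bMH rho gamma mu IH IM Z -> 0 < IH ->
     pfun a w IH = eta /\
     IM = bMH / mu * hfun l (pfun a w IH) q * IH /\
     (forall i, (1 <= i <= n)%nat -> Z i = IH))
  /\
  (forall IH IM Z IH' IM' Z',
     equilibriumO a w n k q l SH bHM bMH rho gamma mu IH IM Z -> 0 < IH ->
     equilibriumO a w n k q l SH bHM bMH rho gamma mu IH' IM' Z' -> 0 < IH' ->
     IH = IH' /\ IM = IM' /\ (forall i, (1 <= i <= n)%nat -> Z i = Z' i)).
Proof.
  intros HA Hn Hk Hq Hl HS HbHM HbMH Hrho Hgamma Hmu HR0 Re eta r.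
  assert (HRe1 : 1 < Re) by (eapply Rhat_gt1; eauto).
  pose proof (fun IH IM Z => equilibriumO_pos_iff a w n k q l SH bHM bMH rho gamma mu
                IH IM Z HA Hn Hk Hq Hl HS HbHM HbMH Hrho Hgamma Hmu HRe1) as Hchar.
  fold Re in Hchar.
  split; [split|split].
  - intros (IH & IM & Z & Heq).
    destruct (proj1 (Hchar IH IM Z) Heq) as (HIH & Hp & _).
    split; [exists IH; split; [lra|apply (pfun_eq_iff_root a w HA); [lra|exact Hp]]|].
    apply p_equilibrium_in_unit_window; [lra|lra|].
    rewrite <- Hp. apply pfun_in_unit; [exact HA|lra].
  - intros [(x & Hx & Hr) _].
    apply pfun_eq_iff_root in Hr; [|exact HA|lra].
    exists x, (bMH / mu * hfun l (pfun a w x) q * x), (fun _ => x).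
    apply Hchar. repeat split; auto.
  - intros IH IM Z Heq HIH. apply (proj1 (Hchar IH IM Z) (conj Heq HIH)).
  - intros IH IM Z IH' IM' Z' Heq HIH Heq' HIH'.
    destruct (proj1 (Hchar IH IM Z) (conj Heq HIH)) as (_ & Hp & HIM & HZ).
    destruct (proj1 (Hchar IH' IM' Z') (conj Heq' HIH')) as (_ & Hp' & HIM' & HZ').
    assert (HIH_eq : IH = IH') by (apply (pfun_inj_pos a w HA); congruence).
    subst IH'. split; [reflexivity|split; [congruence|]].
    intros i Hi. now rewrite HZ, HZ'.
Qed.
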